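(* Consider the generalized dynamic-network coding (GDNC) scheme described in the context, with $M\ge 2$ users and integer parameters $k_1\ge 1$, $k_2\ge 1$. Then there is a field size $q_0$ such that for every finite field $\mathrm{GF}(q)$ with $q\ge q_0$ the network-coding coefficients can be chosen so that, for every user $j$ and every broadcast slot $t\in\{1,\dots,k_1\}$, the outage probability $P_{o,j}$ of the information packet $I_j(t)$ at the base station satisfies $$\lim_{\mathrm{SNR}\to\infty}\frac{-\log P_{o,j}}{\log \mathrm{SNR}} = M+k_2,$$ i.e. the diversity order of the GDNC scheme is $D_{\mathrm{GDNC}}=M+k_2$.
   Context: Network model: $M$ users (indexed $1,\dots,M$) each have independent information for a common base station (BS, index $0$). Every single transmission from a user $j$ to a receiver $i\in\{0,1,\dots,M\}\setminus\{j\}$ in a given time slot is received as $y=hx+n$, with $n$ zero-mean Gaussian noise and $h$ a Rayleigh fading coefficient of unit variance; all fading coefficients are independent across transmitters, receivers and time slots (block fading: constant within a transmission, i.i.d. across transmissions), all links have the same average SNR, and all transmissions use the same information rate $R$. A transmitted packet is correctly decoded at a receiver iff $|h|^2\ge g$ where $g=(2^R-1)/\mathrm{SNR}$; otherwise the link is in outage, which happens with probability $P_e=1-e^{-g}$ independently for each link and slot. Receivers have perfect channel state information; transmitters have none. GDNC scheme over $\mathrm{GF}(q)$: packets are treated as elements of (vectors over) $\mathrm{GF}(q)$. Broadcast phase: in each of $k_1$ time slots $t=1,\dots,k_1$, each user $j$ broadcasts a new information packet $I_j(t)$ of its own to the BS and to all other users, each of which independently either decodes it correctly or not (according to the outage model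 above). Cooperative phase: in each of $k_2$ further time slots $t'=1,\dots,k_2$, each user $j$ transmits to the BS a parity packet $P_j(t')$ which is a fixed $\mathrm{GF}(q)$-linear combination (coefficients fixed in advance, not depending on channel realizations) of all $k_1M$ information packets $I_i(s)$, $1\le i\le M$, $1\le s\le k_1$, where any partner packet that user $j$ did not decode correctly is replaced by the all-zero packet. The overall rate is $k_1/(k_1+k_2)$. The BS knows which packets were replaced by zero and which of the $k_1M+k_2M$ transmissions it received correctly; the packet $I_j(t)$ is in outage at the BS if it is not uniquely determined by the correctly received packets (via the resulting linear system). $P_{o,j}$ denotes the probability of this event. The diversity order is $D=\lim_{\mathrm{SNR}\to\infty}(-\log P_{o,j})/\log\mathrm{SNR}$. *)

From HB Require Import structures.
From mathcomp Require Import all_boot all_order all_algebra.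
From Stdlib Require Import Reals.

Set Implicit Arguments.
Unset Strict Implicit.
Unset Printing Implicit Defensive.

(* Network-coding coefficients: coeffs j t' i s is the coefficient of the
   information packet I_i(s) in the parity packet P_j(t').
   Users are indexed by 'I_M (user number = index + 1), broadcast slots by
   'I_k1, cooperative slots by 'I_k2. *)
Definition coeffs (F : Type) (M k1 k2 : nat) : Type :=
  'I_M -> 'I_k2 -> 'I_M -> 'I_k1 -> F.

(* Transmission links:
   inl (j, s, None)    : broadcast of I_j(s) from user j to the BS
   inl (j, s, Some i)  : broadcast of I_j(s) from user j to user i (i <> j)
   inr (j, t')         : parity packet P_j(t') from user j to the BS *)
Definition link (M k1 k2 : nat) : Type :=
  (('I_M * 'I_k1 * option 'I_M) + ('I_M * 'I_k2))%type.

Definition valid_link (M k1 k2 : nat) (l : link M k1 k2) : bool :=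
  match l with
  | inl (j, _, Some i) => i != j
  | _ => true
  end.

(* A channel realization: true = correctly decoded, false = outage. *)
Definition pattern (M k1 k2 : nat) := {ffun link M k1 k2 -> bool}.

Definition infovec (F : finFieldType) (M k1 : nat) := {ffun 'I_M * 'I_k1 -> F}.

Section Coding.
Local Open Scope ring_scope.
Variables (F : finFieldType) (M k1 k2 : nat).

(* Parity packet P_j(t') formed by user j under realization w: partner
   packets not decoded by user j are replaced by 0. *)
Definition parity (c : coeffs F M k1 k2) (w : pattern M k1 k2)
  (j : 'I_M) (t' : 'I_k2) (x : infovec F M k1) : F :=
  \sum_(p : 'I_M * 'I_k1)
     (if (p.1 == j) || w (inl (p.1, p.2, Some j))
      then c j t' p.1 p.2 * x p else 0).

Definition received_agree (c : coeffs F M k1 k2) (w : pattern M k1 k2)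
  (x y : infovec F M k1) : bool :=
  [forall p : 'I_M * 'I_k1, w (inl (p.1, p.2, None)) ==> (x p == y p)] &&
  [forall jt : 'I_M * 'I_k2,
     w (inr jt) ==> (parity c w jt.1 jt.2 x == parity c w jt.1 jt.2 y)].

Definition determined (c : coeffs F M k1 k2) (w : pattern M k1 k2)
  (j : 'I_M) (t : 'I_k1) : bool :=
  [forall x : infovec F M k1, forall y : infovec F M k1,
     received_agree c w x y ==> (x (j, t) == y (j, t))].

Definition in_outage c w j t : bool := ~~ determined c w j t.

(* Realizations whose (meaningless) self-links are fixed to true, so that
   summing over them sums over the realizations of the genuine links. *)
Definition admissible (w : pattern M k1 k2) : bool :=
  [forall l : link M k1 k2, ~~ valid_link l ==> w l].
End Coding.

Section Probability.
Local Open Scope R_scope.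

Definition Pe (rate snr : R) : R := 1 - exp (- ((Rpower 2 rate - 1) / snr)).

Definition Pout (F : finFieldType) (M k1 k2 : nat) (c : coeffs F M k1 k2)
  (rate snr : R) (j : 'I_M) (t : 'I_k1) : R :=
  \big[Rplus/R0]_(w : pattern M k1 k2 | admissible w && in_outage c w j t)
    \big[Rmult/R1]_(l : link M k1 k2 | valid_link l)
       (if w l then 1 - Pe rate snr else Pe rate snr).

Definition lim_at_infty (f : R -> R) (L : R) : Prop :=
  forall eps : R, 0 < eps -> exists X : R, forall x : R, X < x -> Rabs (f x - L) < eps.
End Probability.

(* Links fail independently with probability P_e ~ (2^R - 1) / SNR, so it
   suffices that, for suitable coefficients, the fewest link failures putting
   I_j(t) in outage is exactly M + k2: P_out is then squeezed between two
   constant multiples of P_e^(M + k2).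
   Failing the M links that carry I_j(t) and the k2 parity packets of user j
   leaves I_j(t) undetermined whatever the coefficients.
   With fewer failures, every packet erased at the BS can be matched with its
   own received parity packet from a user that knows it (Hall's condition holds
   by counting). The determinant of the resulting linear system is a polynomial
   in the coding coefficients which evaluates to 1 at the 0/1 coefficients
   selecting the matching; over a field larger than the degree of the product
   of all these determinants, one choice of coefficients avoids all their
   roots, so every such system is invertible. *)

From HB Require Import structures.
From mathcomp Require Import all_boot all_order all_algebra.
From Stdlib Require Import Reals Lia Lra.
From mathcomp Require Import Rstruct zify.

Set Implicit Arguments.
Unset Strict Implicit.
Unset Printing Implicit Defensive.

Import GRing.Theory.

Section IteratedPolynomials.
Local Open Scope ring_scope.
Variable R : idomainType.

(* [tpoly n] is R[X_0][X_1]...[X_(n-1)], the outermost variable being X_(n-1). *)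
Fixpoint tpoly (n : nat) : idomainType :=
  if n is n'.+1 then {poly tpoly n'} else R.

Fixpoint tpolyC (n : nat) : {rmorphism R -> tpoly n} :=
  match n return {rmorphism R -> tpoly n} with
  | 0 => idfun
  | n'.+1 => (polyC \o tpolyC n')%FUN
  end.

Fixpoint teval (n : nat) (x : nat -> R) : {rmorphism tpoly n -> R} :=
  match n return {rmorphism tpoly n -> R} with
  | 0 => idfun
  | n'.+1 => (teval n' x \o horner_eval (tpolyC n' (x n')))%FUN
  end.

Fixpoint tvar (n i : nat) : tpoly n :=
  match n return tpoly n with
  | 0 => 0
  | n'.+1 => if i == n' then 'X else (tvar n' i)%:P
  end.

Lemma tevalS n x (p : tpoly n.+1) : teval n.+1 x p = teval n x p.[tpolyC n (x n)].
Proof. by []. Qed.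

Lemma tevalC n x a : teval n x (tpolyC n a) = a.
Proof. by elim: n => [//|n IHn]; rewrite tevalS /= hornerC IHn. Qed.

Lemma eq_teval n x y (p : tpoly n) :
  (forall i : nat, (i < n)%nat -> x i = y i) -> teval n x p = teval n y p.
Proof.
elim: n p => [//|n IHn] p exy; rewrite !tevalS exy // IHn // => i lt_in.
exact/exy/ltnW.
Qed.

Lemma teval_var n x i : (i < n)%nat -> teval n x (tvar n i) = x i.
Proof.
elim: n => [//|n IHn]; rewrite ltnS leq_eqVlt tevalS /=.
case: eqP => [-> _|_ /= lt_in]; first by rewrite hornerX tevalC.
by rewrite hornerC IHn.
Qed.

Fixpoint tdeg_le (n D : nat) : tpoly n -> Prop :=
  match n return tpoly n -> Prop with
  | 0 => fun _ => True
  | n'.+1 => fun p => (size p <= D.+1)%nat /\ forall i, tdeg_le D (p`_i)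
  end.

Lemma tdeg_le_trans n D D' (p : tpoly n) : (D <= D')%nat -> tdeg_le D p -> tdeg_le D' p.
Proof.
elim: n p => [//|n IHn] p leDD' /= [szp coefp].
by split=> [|i]; [exact: leq_trans szp _ | exact: IHn].
Qed.

Lemma tdeg_le0 n D : tdeg_le D (0 : tpoly n).
Proof. by elim: n => [//|n IHn] /=; split=> [|i]; rewrite ?size_poly0 ?coef0. Qed.

Lemma tdeg_leC n D a : tdeg_le D (tpolyC n a).
Proof.
elim: n => [//|n IHn] /=; split=> [|i]; first exact: leq_trans (size_polyC_leq1 _) _.
by rewrite coefC; case: eqP => _; [exact: IHn | exact: tdeg_le0].
Qed.

Lemma tdeg_le1 n D : tdeg_le D (1 : tpoly n).
Proof. by rewrite -(rmorph1 (tpolyC n)); exact: tdeg_leC. Qed.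

Lemma tdeg_le_var n i : tdeg_le 1 (tvar n i).
Proof.
elim: n => [//|n IHn] /=; case: eqP => _ /=; split=> [|j].
- by rewrite size_polyX.
- by rewrite coefX; case: eqP => _; [exact: tdeg_le1 | exact: tdeg_le0].
- exact: leq_trans (size_polyC_leq1 _) _.
- by rewrite coefC; case: eqP => _; [exact: IHn | exact: tdeg_le0].
Qed.

Lemma tdeg_leD n D (p q : tpoly n) : tdeg_le D p -> tdeg_le D q -> tdeg_le D (p + q).
Proof.
elim: n p q => [//|n IHn] p q /= [szp coefp] [szq coefq]; split=> [|i].
  by apply: leq_trans (size_polyD _ _) _; rewrite geq_max szp szq.
by rewrite coefD; apply: IHn.
Qed.

Lemma tdeg_leN n D (p : tpoly n) : tdeg_le D p -> tdeg_le D (- p).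
Proof.
elim: n p => [//|n IHn] p /= [szp coefp].
by split=> [|i]; rewrite ?size_polyN ?coefN //; apply: IHn.
Qed.

Lemma tdeg_le_sum n D (I : Type) (r : seq I) (P : pred I) (f : I -> tpoly n) :
  (forall i, P i -> tdeg_le D (f i)) -> tdeg_le D (\sum_(i <- r | P i) f i).
Proof. by move=> Df; apply: big_ind => //; [exact: tdeg_le0 | exact: tdeg_leD]. Qed.

Lemma tdeg_leM n D1 D2 (p q : tpoly n) :
  tdeg_le D1 p -> tdeg_le D2 q -> tdeg_le (D1 + D2) (p * q).
Proof.
elim: n p q => [//|n IHn] p q /= [szp coefp] [szq coefq]; split=> [|i].
  apply: leq_trans (size_polyMleq _ _) _.
  by rewrite -subn1 leq_subLR add1n -addnS -addSn leq_add.
by rewrite coefM; apply: tdeg_le_sum => j _; apply: IHn.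
Qed.

Lemma tdeg_le_prod n D (I : Type) (r : seq I) (P : pred I) (f : I -> tpoly n) :
  (forall i, P i -> tdeg_le D (f i)) -> tdeg_le (size r * D) (\prod_(i <- r | P i) f i).
Proof.
move=> Df; elim: r => [|i r IHr]; first by rewrite big_nil; exact: tdeg_le1.
rewrite big_cons mulSn; case: ifP => Pi; first by apply: tdeg_leM => //; exact: Df.
by apply: tdeg_le_trans IHr; rewrite leq_addl.
Qed.

Lemma tdeg_le_det n k (A : 'M[tpoly n]_k) :
  (forall i j, tdeg_le 1 (A i j)) -> tdeg_le k (\det A).
Proof.
move=> DA; apply: tdeg_le_sum => s _; rewrite -[X in tdeg_le X _]/(0 + k)%nat.
apply: tdeg_leM.
  by case: (perm.odd_perm s); [apply/tdeg_leN/tdeg_le1 | exact: tdeg_le1].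
by rewrite -[X in tdeg_le X _]muln1 -{1}(size_enum_ord k) enumT; exact: tdeg_le_prod.
Qed.
End IteratedPolynomials.

Section Nonroot.
Local Open Scope ring_scope.

Lemma tpoly_nonroot (F : finIdomainType) n D (p : tpoly F n) :
  (D < #|F|)%nat -> p != 0 -> tdeg_le D p -> exists x, teval n x p != 0.
Proof.
move=> ltDF; elim: n p => [|n IHn] p p_neq0; first by exists (fun=> 0).
move=> [szp coefp]; have [x lc_x] : exists x, teval n x (lead_coef p) != 0.
  by apply: IHn (coefp _); rewrite lead_coef_eq0.
pose px := map_poly (teval n x) p.
have szpx : size px = size p by apply: size_map_poly_id0.
have px_neq0 : px != 0 by rewrite -size_poly_gt0 szpx size_poly_gt0.
have [a pxa_neq0] : exists a, ~~ root px a.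
  apply/existsP; rewrite -negb_forall; apply/forallP => all_roots.
  have := max_poly_roots px_neq0 (rs := enum F); rewrite enum_uniq -cardE.
  have -> : all (root px) (enum F) by apply/allP => y _; exact: all_roots.
  move=> /(_ isT isT) /leq_trans /(_ (leq_trans (eq_leq szpx) szp)).
  by rewrite ltnS leqNgt ltDF.
exists (fun i => if i == n then a else x i); rewrite tevalS eqxx.
rewrite (@eq_teval _ _ _ x) => [|i lt_in]; last by rewrite (ltn_eqF lt_in).
by rewrite -horner_map tevalC.
Qed.
End Nonroot.

Section GreedyChoice.
Variables (T S : finType) (s0 : S).

(* Hall's condition holds trivially when every candidate set is at least as
   large as U, so the representatives can be chosen one at a time. *)
Lemma exists_injective_choice (U : {set T}) (C : T -> {set S}) :
  (forall p, p \in U -> #|U| <= #|C p|) ->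
  exists m : {ffun T -> S}, (forall p, p \in U -> m p \in C p) /\ {in U &, injective m}.
Proof.
move: {2}#|U| (erefl #|U|) => n; elim: n U => [|n IHn] U cardU largeC.
  exists [ffun=> s0]; move/eqP: cardU; rewrite cards_eq0 => /eqP ->.
  by split=> p; rewrite inE.
have /card_gt0P[p0 Up0] : 0 < #|U| by rewrite cardU.
have cardU' : #|U :\ p0| = n by move: cardU; rewrite (cardsD1 p0) Up0 add1n => -[].
have [m' [m'C m'_inj]] : exists m' : {ffun T -> S},
    (forall p, p \in U :\ p0 -> m' p \in C p) /\ {in U :\ p0 &, injective m'}.
  apply: IHn => // p /setD1P[_ Up]; rewrite cardU'.
  by apply: leq_trans (largeC _ Up); rewrite cardU.
have /card_gt0P[s /setDP[Cs m's]] : 0 < #|C p0 :\: m' @: (U :\ p0)|.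
  rewrite cardsD subn_gt0; apply: leq_ltn_trans (subset_leq_card (subsetIr _ _)) _.
  by apply: leq_ltn_trans (leq_imset_card _ _) _; rewrite cardU' -cardU largeC.
exists [ffun p => if p == p0 then s else m' p]; split=> [p Up|p p' Up Up'].
  by rewrite ffunE; case: eqP => [->|/eqP ne_pp0] //; apply: m'C; rewrite !inE ne_pp0.
rewrite !ffunE; case: eqP => [->|/eqP ne_pp0]; case: eqP => [->|/eqP ne_p'p0] //.
- by move=> E; case/negP: m's; rewrite E imset_f // !inE ne_p'p0.
- by move=> E; case/negP: m's; rewrite -E imset_f // !inE ne_pp0.
- by apply: m'_inj; rewrite !inE ?ne_pp0 ?ne_p'p0.
Qed.
End GreedyChoice.

Lemma cardsU_disjoint (T : finType) (A B : {set T}) :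
  [disjoint A & B] -> #|A :|: B| = #|A| + #|B|.
Proof. by move=> /disjoint_setI0 AB0; rewrite -cardsUI AB0 cards0 addn0. Qed.

Lemma disjoint_imsets (aT bT rT : finType) (f : aT -> rT) (g : bT -> rT)
    (A : {pred aT}) (B : {pred bT}) :
  (forall a b, f a != g b) -> [disjoint f @: A & g @: B].
Proof.
move=> neq_fg; rewrite -setI_eq0; apply/set0Pn => -[_ /setIP[/imsetP[a _ ->]]].
by case/imsetP=> b _ /eqP; rewrite (negPf (neq_fg a b)).
Qed.

Notation info_index M k1 := ('I_M * 'I_k1)%type.
Notation parity_index M k2 := ('I_M * 'I_k2)%type.

Section Erasures.
Variables M k1 k2 : nat.
Local Notation info_index := (info_index M k1).
Local Notation parity_index := (parity_index M k2).

Definition erased (w : pattern M k1 k2) (p : info_index) : bool :=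
  ~~ w (inl (p.1, p.2, None)).

Definition knows (w : pattern M k1 k2) (j : 'I_M) (p : info_index) : bool :=
  (p.1 == j) || w (inl (p.1, p.2, Some j)).

Definition recovery_matching (w : pattern M k1 k2) (m : {ffun info_index -> parity_index}) :=
  [forall p, erased w p ==> w (inr (m p)) && knows w (m p).1 p] && dinjectiveb m (erased w).

Definition failed_links (w : pattern M k1 k2) : {set link M k1 k2} :=
  [set l | valid_link l && ~~ w l].

Lemma failures_seen_by_packet w (p : info_index) :
  #|[set q | erased w q]| + #|[set jt : parity_index | ~~ w (inr jt)]|
    + #|[set j | ~~ knows w j p]| <= #|failed_links w|.
Proof.
pose direct (q : info_index) : link M k1 k2 := inl (q.1, q.2, None).
pose coop jt : link M k1 k2 := inr jt.
pose relay j : link M k1 k2 := inl (p.1, p.2, Some j).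
have [direct_inj coop_inj relay_inj] :
    [/\ injective direct, injective coop & injective relay].
  by split=> [[? ?] [? ?] [-> ->]|? ? [->]|? ? [->]].
rewrite -(card_imset _ direct_inj) -(card_imset _ coop_inj) -(card_imset _ relay_inj).
rewrite -!cardsU_disjoint; last 2 first.
- rewrite -setI_eq0 setIUl setU_eq0 !setI_eq0 !disjoint_imsets // => a b.
  by apply/eqP; case.
- by apply: disjoint_imsets.
apply/subset_leq_card/subsetP => l; rewrite !inE.
case/orP => [/orP[]|] /imsetP[x Hx ->]; move: Hx; rewrite !inE //=.
by rewrite /knows negb_or eq_sym => /andP[-> ->].
Qed.

Lemma exists_recovery_matching w :
  0 < M -> 0 < k2 -> #|failed_links w| < M + k2 -> exists m, recovery_matching w m.
Proof.
move=> M_gt0 k2_gt0 few_failures.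
pose U := [set q | erased w q].
pose C p := [set jt : parity_index | w (inr jt) && knows w jt.1 p].
have largeC p : p \in U -> #|U| <= #|C p|.
  move=> _; have fails := failures_seen_by_packet w p.
  set f := #|[set jt : parity_index | ~~ w (inr jt)]| in fails.
  set g := #|[set j | ~~ knows w j p]| in fails.
  have covered : M * k2 <= #|C p| + f + g * k2.
    have -> : M * k2 = #|C p| + #|~: C p| by rewrite cardsC card_prod !card_ord.
    rewrite -addnA leq_add2l -[k2 in g * k2](card_ord k2) -cardsT -cardsX.
    apply: leq_trans (leq_card_setU _ _).
    by apply/subset_leq_card/subsetP => -[i t']; rewrite !inE andbT negb_and.
  have sender_knows : g <= M.-1.
    rewrite -(card_ord M) -(cardsC1 p.1); apply/subset_leq_card/subsetP => j.
    by rewrite !inE /knows negb_or eq_sym => /andP[].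
  move: fails covered sender_knows few_failures M_gt0 k2_gt0.
  set e := #|U|; set c := #|C p|; set n := #|failed_links w|; clearbody e f g c n.
  nia.
have [m [mC m_inj]] := exists_injective_choice (Ordinal M_gt0, Ordinal k2_gt0) largeC.
exists m; apply/andP; split.
  by apply/forallP => p; apply/implyP => erased_p; have := mC p; rewrite !inE; exact.
by apply/dinjectiveP; apply: sub_in2 m_inj => q; rewrite inE.
Qed.
End Erasures.

Section DecodingMatrix.
Local Open Scope ring_scope.
Variables (F : finFieldType) (M k1 k2 : nat).

Local Notation info_index := (info_index M k1).
Local Notation parity_index := (parity_index M k2).
Local Notation coeff_index := (parity_index * info_index)%type.
Local Notation nvars := #|{: coeff_index}|.
Local Notation ninfo := #|{: info_index}|.

(* The network-coding coefficients are the variables of [tpoly F nvars],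
   numbered through [enum_rank]. *)
Definition coeffs_at (x : nat -> F) : coeffs F M k1 k2 :=
  fun j t' i s => x (enum_rank (((j, t'), (i, s)) : coeff_index)).

Definition decoding_entry (w : pattern M k1 k2) (m : {ffun info_index -> parity_index})
    (p p' : info_index) : tpoly F nvars :=
  if erased w p then
    if erased w p' && knows w (m p).1 p' then tvar F nvars (enum_rank (m p, p')) else 0
  else (p == p')%:R.

(* Row p expresses the difference of two information vectors seen at the BS
   either directly (p not erased) or through the parity packet m p. *)
Definition decoding_matrix w m : 'M[tpoly F nvars]_ninfo :=
  \matrix_(a, b) decoding_entry w m (enum_val a) (enum_val b).

Definition matching_point (w : pattern M k1 k2) (m : {ffun info_index -> parity_index})
    (i : nat) : F :=
  [exists p, erased w p && (enum_rank (m p, p) == i :> nat)]%:R.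

Lemma decoding_matrix_at_matching w m : recovery_matching w m ->
  map_mx (teval nvars (matching_point w m)) (decoding_matrix w m) = 1%:M.
Proof.
move=> /andP[/forallP matched /dinjectiveP m_inj].
apply/matrixP => a b; rewrite !mxE /decoding_entry.
case: ifP => [erased_a|_]; last first.
  by rewrite (inj_eq enum_val_inj) rmorph_nat.
case: ifP => [/andP[erased_b knows_b]|not_matched].
  rewrite teval_var // /matching_point; congr (nat_of_bool _)%:R.
  apply/idP/idP => [/existsP[p /andP[erased_p]]|/eqP<-].
    rewrite (inj_eq (@ord_inj _)) (inj_eq enum_rank_inj) xpair_eqE.
    move=> /andP[/eqP mp_ma /eqP p_b].
    by apply/eqP/enum_val_inj; rewrite -p_b; apply: m_inj => //; rewrite mp_ma.
  by apply/existsP; exists (enum_val a); rewrite erased_a eqxx.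
rewrite rmorph0; case: eqP => // eq_ab; subst b.
have /implyP/(_ erased_a)/andP[_ knows_a] := matched (enum_val a).
by rewrite erased_a knows_a in not_matched.
Qed.

Lemma det_decoding_matrix_neq0 w m : recovery_matching w m -> \det (decoding_matrix w m) != 0.
Proof.
move=> matching; apply/eqP => det0.
have := congr1 determinant (decoding_matrix_at_matching matching).
by rewrite det_map_mx det0 rmorph0 det1 => /eqP; rewrite eq_sym oner_eq0.
Qed.

Lemma parityB (c : coeffs F M k1 k2) w j t' (x y : infovec F M k1) :
  parity c w j t' x - parity c w j t' y =
  \sum_p (if knows w j p then c j t' p.1 p.2 * (x p - y p) else 0).
Proof.
rewrite /parity -sumrB; apply: eq_bigr => p _.
by rewrite /knows; case: ifP; rewrite ?subrr ?mulrBr.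
Qed.

Lemma decoding_matrix_kernel x w (m : {ffun info_index -> parity_index}) x1 y1 :
  (forall p, erased w p -> w (inr (m p))) -> received_agree (coeffs_at x) w x1 y1 ->
  map_mx (teval nvars x) (decoding_matrix w m) *m \col_a (x1 (enum_val a) - y1 (enum_val a))
    = 0.
Proof.
move=> received /andP[/forallP direct /forallP coop].
have direct_eq p : ~~ erased w p -> x1 p = y1 p.
  by rewrite negbK => wp; apply/eqP; have := direct p; rewrite wp.
apply/matrixP => a i; rewrite !mxE; under eq_bigr do rewrite !mxE.
rewrite -(big_enum_val (fun p =>
  teval nvars x (decoding_entry w m (enum_val a) p) * (x1 p - y1 p))).
case: (boolP (erased w (enum_val a))) => [erased_a|kept_a].
  have := coop (m (enum_val a)); rewrite received //= -subr_eq0 parityB => /eqP parity_eq.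
  rewrite -[RHS]parity_eq; apply: eq_big => // p _; rewrite /decoding_entry erased_a.
  case: (boolP (erased w p)) => [erased_p|kept_p] /=; last first.
    by rewrite rmorph0 mul0r direct_eq // subrr mulr0; case: ifP.
  case: ifP => _; last by rewrite rmorph0 mul0r.
  by rewrite teval_var // /coeffs_at -!surjective_pairing.
rewrite (bigD1 (enum_val a)) //= big1 => [|p /negPf ne_p]; last first.
  by rewrite /decoding_entry (negPf kept_a) eq_sym ne_p rmorph0 mul0r.
by rewrite /decoding_entry (negPf kept_a) eqxx rmorph1 mul1r addr0 direct_eq ?subrr.
Qed.

Lemma determined_of_decoding_unit x w (m : {ffun info_index -> parity_index}) j t :
  (forall p, erased w p -> w (inr (m p))) ->
  \det (map_mx (teval nvars x) (decoding_matrix w m)) != 0 ->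
  determined (coeffs_at x) w j t.
Proof.
move=> received det_neq0; apply/forallP => x1; apply/forallP => y1; apply/implyP => agree.
suff -> : x1 = y1 by [].
have B_unit : map_mx (teval nvars x) (decoding_matrix w m) \in unitmx.
  by rewrite unitmxE unitfE.
have /(canRL (mulKmx B_unit)) := decoding_matrix_kernel received agree.
rewrite mulmx0 => /matrixP diff0; apply/ffunP => p; apply/eqP; rewrite -subr_eq0.
by have := diff0 (enum_rank p) 0; rewrite !mxE enum_rankK => ->.
Qed.
End DecodingMatrix.

Section GenericCoefficients.
Local Open Scope ring_scope.
Variables M k1 k2 : nat.
Hypotheses (M_gt0 : (0 < M)%nat) (k2_gt0 : (0 < k2)%nat).

Local Notation configuration :=
  (pattern M k1 k2 * {ffun info_index M k1 -> parity_index M k2})%type.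

Lemma exists_generic_coeffs : exists q0 : nat, forall F : finFieldType, (q0 <= #|F|)%nat ->
  exists c : coeffs F M k1 k2,
    forall w j t, in_outage c w j t -> (M + k2 <= #|failed_links w|)%nat.
Proof.
exists (#|{: configuration}| * #|{: info_index M k1}|).+1 => F large_F.
pose dets := \prod_(wm : configuration | recovery_matching wm.1 wm.2)
  \det (decoding_matrix F wm.1 wm.2).
have dets_neq0 : dets != 0.
  by apply/prodf_neq0 => wm; exact: det_decoding_matrix_neq0.
have deg_dets : tdeg_le (#|{: configuration}| * #|{: info_index M k1}|) dets.
  rewrite [X in tdeg_le (X * _) _]cardT enumT.
  apply: tdeg_le_prod => wm _; apply: tdeg_le_det => a b; rewrite mxE /decoding_entry.
  case: ifP => _; first by case: ifP => _; [exact: tdeg_le_var | exact: tdeg_le0].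
  by case: eqP => _; [exact: tdeg_le1 | exact: tdeg_le0].
have [x dets_x] := tpoly_nonroot large_F dets_neq0 deg_dets.
exists (coeffs_at x) => w j t; apply: contraTT; rewrite -ltnNge => few_failures.
have [m matching] := exists_recovery_matching M_gt0 k2_gt0 few_failures.
apply/negPn; apply: (determined_of_decoding_unit (m := m)).
  by move=> p erased_p; move: matching => /andP[/forallP/(_ p)]; rewrite erased_p => /andP[].
move: dets_x; rewrite rmorph_prod => /prodf_neq0/(_ (w, m) matching).
by rewrite det_map_mx.
Qed.
End GenericCoefficients.

Section IsolatingPattern.
Variables (M k1 k2 : nat) (j : 'I_M) (t : 'I_k1).

(* I_j(t) is lost on every link that carries it and user j's parity packets are
   all lost: M + k2 failures, after which the BS has no information on I_j(t). *)
Definition isolating_pattern : pattern M k1 k2 :=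
  [ffun l : link M k1 k2 => match l with
   | inl (i, s, None) => ~~ ((i == j) && (s == t))
   | inl (i, s, Some r) => ~~ [&& i == j, s == t & r != j]
   | inr (i, _) => i != j
   end].

Lemma admissible_isolating_pattern : admissible isolating_pattern.
Proof.
apply/forallP => -[[[i s] [r|]]|[i t']] //=; apply/implyP; rewrite negbK ffunE /=.
by move=> /eqP->; case: (i == j); rewrite ?andbF.
Qed.

Lemma card_failed_isolating_pattern : (0 < M)%nat ->
  (#|failed_links isolating_pattern| <= M + k2)%nat.
Proof.
move=> M_gt0.
pose direct : {set link M k1 k2} := [set inl (j, t, None)].
pose relayed := (fun r : 'I_M => inl (j, t, Some r) : link M k1 k2) @: [set~ j].
pose coop := (fun jt : parity_index M k2 => inr jt : link M k1 k2) @: setX [set j] setT.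
apply: (@leq_trans #|direct :|: relayed :|: coop|).
  apply/subset_leq_card/subsetP => -[[[i s] [r|]]|[i t']]; rewrite !inE ffunE /= ?negbK.
  - case/andP=> ne_ri /and3P[/eqP-> /eqP-> ne_rj].
    by rewrite imset_f ?orbT // !inE.
  - by case/andP=> /eqP-> /eqP->; rewrite eqxx.
  - by move=> eq_ij; apply/orP; right; apply: imset_f; rewrite !inE eq_ij.
have -> : (M + k2 = 1 + M.-1 + k2)%nat by rewrite add1n prednK.
apply: leq_trans (leq_card_setU _ _) (leq_add (leq_trans (leq_card_setU _ _) _) _).
- by rewrite cards1 leq_add2l (leq_trans (leq_imset_card _ _)) // cardsC1 card_ord.
- by rewrite (leq_trans (leq_imset_card _ _)) // cardsX cards1 cardsT card_ord mul1n.
Qed.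

Local Open Scope ring_scope.

Lemma isolating_pattern_outage (F : finFieldType) (c : coeffs F M k1 k2) :
  in_outage c isolating_pattern j t.
Proof.
apply/negP => /forallP/(_ [ffun=> 0])/forallP/(_ [ffun p => (p == (j, t))%:R]).
rewrite !ffunE eqxx eq_sym oner_eq0 implybF => /negP; apply; apply/andP; split.
  apply/forallP => -[i s]; rewrite !ffunE /=; apply/implyP.
  by case: (eqVneq (i, s) (j, t)) => [[-> ->]|_]; rewrite ?eqxx.
apply/forallP => -[i t']; rewrite ffunE /=; apply/implyP => ne_ij.
rewrite /parity !big1 // => -[i0 s0] _; rewrite !ffunE /=.
  case: (eqVneq (i0, s0) (j, t)) => [[-> ->]|_]; rewrite ?mulr0 ?if_same //.
  by rewrite eq_sym (negPf ne_ij) !eqxx.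
by rewrite mulr0 if_same.
Qed.
End IsolatingPattern.

Section RealAsymptotics.
Local Open Scope R_scope.

Lemma one_sub_exp_opp_bounds g : 0 <= g <= 1 -> g / 2 <= 1 - exp (- g) <= g.
Proof.
move=> g01; split; last by have := exp_ineq1_le (- g); lra.
have exp_g : 1 + g <= exp g by apply: exp_ineq1_le.
have exp_opp : exp (- g) * exp g = 1 by rewrite -exp_plus Rplus_opp_l exp_0.
have := exp_pos (- g); nra.
Qed.

Lemma ln_le x y : 0 < x -> x <= y -> ln x <= ln y.
Proof. by move=> x_gt0 [/(ln_increasing _ _ x_gt0)/Rlt_le|->] //; apply: Rle_refl. Qed.

Lemma lim_ln_ratio_of_power_bounds (f : R -> R) (d : nat) (lo hi S0 : R) :
  0 < lo -> (forall s, S0 < s -> lo <= f s * s ^ d <= hi) ->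
  lim_at_infty (fun s => - ln (f s) / ln s) (INR d).
Proof.
move=> lo_gt0 bounds eps eps_gt0.
pose L := Rabs (ln lo) + Rabs (ln hi).
exists (Rmax (Rmax S0 1) (exp (L / eps))) => s.
move=> /Rmax_Rlt[/Rmax_Rlt[S0_s s_gt1] exp_s].
have ln_s_gt : L / eps < ln s.
  by rewrite -(ln_exp (L / eps)); apply: ln_increasing (exp_pos _) exp_s.
have ln_s_gt0 : 0 < ln s by rewrite -ln_1; apply: ln_increasing; lra.
have [lo_le le_hi] := bounds _ S0_s.
have sd_gt0 : 0 < s ^ d by apply: pow_lt; lra.
have fs_gt0 : 0 < f s.
  by apply: (Rmult_lt_reg_r (s ^ d)); rewrite ?Rmult_0_l; lra.
have ln_bound : Rabs (ln (f s) + INR d * ln s) <= L.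
  rewrite -ln_pow -?ln_mult; try lra.
  have ln_lo := ln_le lo_gt0 lo_le.
  have ln_hi := ln_le (Rlt_le_trans _ _ _ lo_gt0 lo_le) le_hi.
  have := Rle_abs (ln hi); have := Rle_abs (- ln lo); rewrite Rabs_Ropp.
  have := Rabs_pos (ln lo); have := Rabs_pos (ln hi).
  by move=> *; apply: Rabs_le; rewrite /L; lra.
set V := ln (f s) + INR d * ln s in ln_bound.
have L_lt : L < eps * ln s.
  have -> : L = eps * (L / eps) by field; lra.
  by apply: Rmult_lt_compat_l.
have ratio : (- ln (f s) / ln s - INR d) * ln s = - V by rewrite /V; field; lra.
have := Rle_abs V; have := Rle_abs (- V); rewrite Rabs_Ropp => *.
by apply: Rabs_def1; apply: (Rmult_lt_reg_r (ln s)) => //; rewrite ratio; lra.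
Qed.
End RealAsymptotics.

Section OutageBounds.
Local Open Scope R_scope.

Lemma big_Rmult_const (I : finType) (P : pred I) (x : R) :
  \big[Rmult/R1]_(i | P i) x = x ^ #|P|.
Proof. by rewrite big_const; elim: #|P| => //= n ->. Qed.

Lemma big_Rplus_const (I : finType) (P : pred I) (x : R) :
  \big[Rplus/R0]_(i | P i) x = INR #|P| * x.
Proof.
rewrite big_const; elim: #|P| => [|n IHn]; first by rewrite /=; ring.
by rewrite iterS IHn S_INR; ring.
Qed.

Lemma pow_le1 x n : 0 <= x <= 1 -> x ^ n <= 1.
Proof. by move=> x01; rewrite -(pow1 n); apply: pow_incr. Qed.

Lemma pow_le_pow_of_le1 x m n : 0 <= x <= 1 -> (m <= n)%nat -> x ^ n <= x ^ m.
Proof.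
move=> x01 /subnKC <-; rewrite pow_add.
by have := pow_le x m; have := pow_le1 (n - m) x01; nra.
Qed.

Variables (M k1 k2 : nat) (F : finFieldType) (c : coeffs F M k1 k2).
Variables (rate snr : R) (j : 'I_M) (t : 'I_k1).
Local Notation pe := (Pe rate snr).

Lemma prod_link_probs (w : pattern M k1 k2) :
  \big[Rmult/R1]_(l : link M k1 k2 | valid_link l) (if w l then 1 - pe else pe)
  = (1 - pe) ^ #|[pred l | valid_link l && w l]| * pe ^ #|failed_links w|.
Proof.
rewrite (bigID w) /= cardsE -!big_Rmult_const.
by congr (_ * _); apply: eq_big => // l /andP[_ wl]; rewrite ?wl // (negPf wl).
Qed.

Lemma Pout_le d : 0 <= pe <= 1 ->
  (forall w, in_outage c w j t -> (d <= #|failed_links w|)%nat) ->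
  Pout c rate snr j t <= INR #|[pred w | admissible w && in_outage c w j t]| * pe ^ d.
Proof.
move=> pe01 many_failures; rewrite /Pout -big_Rplus_const.
apply: (big_ind2 (fun a b => a <= b)) => [|a1 a2 b1 b2|w /andP[_ outage]]; try lra.
rewrite prod_link_probs; apply: Rle_trans (pow_le_pow_of_le1 pe01 (many_failures _ outage)).
rewrite -[X in _ <= X]Rmult_1_l; apply: Rmult_le_compat_r; first by apply: pow_le; lra.
by apply: pow_le1; lra.
Qed.

Lemma Pout_ge d : 0 <= pe <= / 2 -> (#|failed_links (isolating_pattern k2 j t)| <= d)%nat ->
  (/ 2) ^ #|[pred l | valid_link l && isolating_pattern k2 j t l]| * pe ^ d
    <= Pout c rate snr j t.
Proof.
move=> pe_small few_failures; rewrite /Pout.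
rewrite (bigD1 (isolating_pattern k2 j t)) /=; last first.
  by rewrite admissible_isolating_pattern isolating_pattern_outage.
set rest := \big[Rplus/R0]_(w | _) _.
have rest_ge0 : 0 <= rest.
  apply: big_ind => [|a b|w _]; try lra.
  apply: big_ind => [|a b|l _]; try nra.
  by case: ifP => _; lra.
rewrite prod_link_probs.
apply: Rle_trans (Rplus_le_compat_l _ _ _ rest_ge0); rewrite Rplus_0_r.
apply: Rmult_le_compat; try (apply: pow_le; lra).
  by apply: pow_incr; lra.
by apply: pow_le_pow_of_le1 => //; lra.
Qed.
End OutageBounds.

Section HighSNR.
Local Open Scope R_scope.

Lemma Rpower2_sub1_gt0 rate : 0 < rate -> 0 < Rpower 2 rate - 1.
Proof.
by move=> rate_gt0; have := Rpower_lt 2 0 rate ltac:(lra) rate_gt0; rewrite Rpower_O; lra.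
Qed.

Lemma Pe_high_snr rate snr : 0 < rate -> 2 * (Rpower 2 rate - 1) < snr ->
  [/\ 0 <= Pe rate snr <= / 2, (Rpower 2 rate - 1) / 2 <= Pe rate snr * snr
    & Pe rate snr * snr <= Rpower 2 rate - 1].
Proof.
move=> /Rpower2_sub1_gt0 g_gt0; set g := Rpower 2 rate - 1 in g_gt0 * => snr_large.
have snr_gt0 : 0 < snr by lra.
have ratio : 0 <= g / snr <= / 2.
  split; first by apply/Rlt_le/Rdiv_lt_0_compat.
  by apply: (Rmult_le_reg_r snr) => //; rewrite /Rdiv Rmult_assoc Rinv_l; lra.
have [lower upper] : g / snr / 2 <= 1 - exp (- (g / snr)) <= g / snr.
  by apply: one_sub_exp_opp_bounds; lra.
have scaled : g / snr * snr = g by field; lra.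
rewrite /Pe -/g; split; [lra | nra | nra].
Qed.

Lemma Pout_mul_snr_pow_bounds (F : finFieldType) M k1 k2 (c : coeffs F M k1 k2)
    rate j t d snr :
  0 < rate -> 2 * (Rpower 2 rate - 1) < snr ->
  (forall w, in_outage c w j t -> (d <= #|failed_links w|)%nat) ->
  (#|failed_links (isolating_pattern k2 j t)| <= d)%nat ->
  (/ 2) ^ #|[pred l | valid_link l && isolating_pattern k2 j t l]|
      * ((Rpower 2 rate - 1) / 2) ^ d
    <= Pout c rate snr j t * snr ^ d
    <= INR #|[pred w | admissible w && in_outage c w j t]| * (Rpower 2 rate - 1) ^ d.
Proof.
move=> rate_gt0 snr_large many_failures isolating_few.
have [Pe_small Pe_ge Pe_le] := Pe_high_snr rate_gt0 snr_large.
have upper := Pout_le (ltac:(lra) : 0 <= Pe rate snr <= 1) many_failures.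
have lower := Pout_ge c Pe_small isolating_few.
set n_outage := INR _ in upper *; set n_kept := #|_| in lower *.
have := Rpower2_sub1_gt0 rate_gt0.
set g := Rpower 2 rate - 1 in snr_large Pe_ge Pe_le * => g_gt0.
have [Pe_snr_ge Pe_snr_le] : (g / 2) ^ d <= (Pe rate snr * snr) ^ d <= g ^ d.
  by split; apply: pow_incr; split; lra.
rewrite Rpow_mult_distr in Pe_snr_ge Pe_snr_le.
have := pow_lt snr d ltac:(lra); have := pow_lt (/ 2) n_kept ltac:(lra).
have := pos_INR #|[pred w | admissible w && in_outage c w j t]|; rewrite -/n_outage.
have := pow_le (Pe rate snr) d ltac:(lra).
split; nra.
Qed.
End HighSNR.

Theorem theorem1 (M k1 k2 : nat) :
  (2 <= M)%N -> (1 <= k1)%N -> (1 <= k2)%N ->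
  exists q0 : nat, forall F : finFieldType, (q0 <= #|F|)%N ->
    exists c : coeffs F M k1 k2,
      forall rate : R, (0 < rate)%R ->
      forall (j : 'I_M) (t : 'I_k1),
        lim_at_infty
          (fun snr : R => (- ln (Pout c rate snr j t) / ln snr)%R)
          (INR (M + k2)).
Proof.
move=> M_ge2 _ k2_gt0; have M_gt0 : (0 < M)%nat by apply: leq_trans M_ge2.
have [q0 generic] := exists_generic_coeffs k1 M_gt0 k2_gt0.
exists q0 => F large_F; have [c outage_failures] := generic F large_F.
exists c => rate rate_gt0 j t.
have g_gt0 := Rpower2_sub1_gt0 rate_gt0.
apply: (lim_ln_ratio_of_power_bounds (S0 := (2 * (Rpower 2 rate - 1))%R)); last first.
  move=> snr snr_large; apply: Pout_mul_snr_pow_bounds => //.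
    by move=> w; apply: outage_failures.
  exact: card_failed_isolating_pattern.
by apply: Rmult_lt_0_compat; apply: pow_lt; lra.
Qed.
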